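(* Let $d\ge 1$ and let $\mathcal{L}_{\leq d}$ be the set of all lonesum $0$-$1$ matrices (of any size, including the empty $0\times 0$ matrix) with no all-zero row and no all-zero column, in which at most $d$ columns are of the same type and at most $d$ rows are of the same type. For a matrix $M$ let $r(M)$ and $c(M)$ be its numbers of rows and columns, and define the formal power series \[ L_{\leq d}(x,y)=\sum_{M\in\mathcal{L}_{\leq d}}\frac{x^{r(M)}}{r(M)!}\frac{y^{c(M)}}{c(M)!}. \] Then \[ L_{\leq d}(x,y)=\frac{1}{E_d(x)+E_d(y)-E_d(x)E_d(y)},\qquad\text{where } E_d(z)=\sum_{i=0}^{d}\frac{z^i}{i!}. \]
   Context: A $0$-$1$ matrix is lonesum if it is uniquely determined by its row sum vector and column sum vector; equivalently, it contains no $2\times 2$ submatrix equal to $\begin{pmatrix}1&0\\0&1\end{pmatrix}$ or $\begin{pmatrix}0&1\\1&0\end{pmatrix}$. Two rows (resp. columns) are of the same type iff they are identical vectors. *)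

From mathcomp Require Import all_boot all_order all_algebra.
Set Implicit Arguments. Unset Strict Implicit. Unset Printing Implicit Defensive.
Import GRing.Theory Num.Theory.
Local Open Scope ring_scope.

(* f m n is the coefficient of x^m y^n *)
Definition fps2 := nat -> nat -> rat.

Definition fps2_add (f g : fps2) : fps2 := fun m n => f m n + g m n.
Definition fps2_sub (f g : fps2) : fps2 := fun m n => f m n - g m n.
Definition fps2_mul (f g : fps2) : fps2 := fun m n =>
  \sum_(i < m.+1) \sum_(j < n.+1) f i j * g (m - i)%N (n - j)%N.
Definition fps2_one : fps2 := fun m n => if (m == 0)%N && (n == 0)%N then 1 else 0.

Definition Ed_x (d : nat) : fps2 := fun m n =>
  if (n == 0)%N && (m <= d)%N then (m`!)%:R^-1 else 0.
Definition Ed_y (d : nat) : fps2 := fun m n =>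
  if (m == 0)%N && (n <= d)%N then (n`!)%:R^-1 else 0.

Definition Ed_denom (d : nat) : fps2 :=
  fps2_sub (fps2_add (Ed_x d) (Ed_y d)) (fps2_mul (Ed_x d) (Ed_y d)).

Definition rowsum m n (M : 'M[bool]_(m, n)) (i : 'I_m) : nat :=
  (\sum_(j < n) nat_of_bool (M i j))%N.
Definition colsum m n (M : 'M[bool]_(m, n)) (j : 'I_n) : nat :=
  (\sum_(i < m) nat_of_bool (M i j))%N.

Definition lonesum m n (M : 'M[bool]_(m, n)) : bool :=
  [forall N : 'M[bool]_(m, n),
     ([forall i, rowsum N i == rowsum M i] && [forall j, colsum N j == colsum M j])
     ==> (N == M)].

Definition no_zero_row m n (M : 'M[bool]_(m, n)) : bool :=
  [forall i, [exists j, M i j]].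
Definition no_zero_col m n (M : 'M[bool]_(m, n)) : bool :=
  [forall j, [exists i, M i j]].

Definition rows_of_type_le d m n (M : 'M[bool]_(m, n)) : bool :=
  [forall i, (#|[set i' | row i' M == row i M]| <= d)%N].
Definition cols_of_type_le d m n (M : 'M[bool]_(m, n)) : bool :=
  [forall j, (#|[set j' | col j' M == col j M]| <= d)%N].

Definition in_L d m n (M : 'M[bool]_(m, n)) : bool :=
  [&& lonesum M, no_zero_row M, no_zero_col M,
      rows_of_type_le d M & cols_of_type_le d M].

Definition L_le (d : nat) : fps2 := fun m n =>
  (#|[set M : 'M[bool]_(m, n) | in_L d M]|)%:R / ((m`! * n`!)%N)%:R.

(* The rows of a lonesum matrix are nested, so a nonempty matrix M
   of L_{<=d} has a nonempty set A of all-ones rows, and a non-full row of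
   maximal row sum shows that the set B of columns whose support is exactly A
   is nonempty too.  The rows of A are identical, and so are the columns of B,
   hence both sets have at most d elements.  Deleting A and B leaves a matrix
   of L_{<=d}; conversely, bordering any matrix of L_{<=d} by such sets A and B
   gives a matrix of L_{<=d} in which they play these two roles.  Counting over
   the choices of A and B gives L = 1 + L (E_d(x) - 1)(E_d(y) - 1), and the
   denominator of the theorem is exactly 1 - (E_d(x) - 1)(E_d(y) - 1). *)
From mathcomp Require Import all_boot all_order all_algebra.
From mathcomp Require Import perm ring.
Set Implicit Arguments. Unset Strict Implicit. Unset Printing Implicit Defensive.
Import GRing.Theory Num.Theory.

Lemma sum_bool_lt (I : finType) (f g : I -> bool) k :
  (forall x, f x -> g x) -> ~~ f k -> g k ->
  \sum_x nat_of_bool (f x) < \sum_x nat_of_bool (g x).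
Proof.
move=> fg nfk gk; rewrite (bigD1 k) //= [X in _ < X](bigD1 k) //=.
rewrite (negbTE nfk) gk add0n add1n ltnS.
by apply: leq_sum => x _; case: (f x) (fg x) => // ->.
Qed.

Section LonesumRows.

Variables (m n : nat) (M : 'M[bool]_(m, n)).
Hypothesis lonesumM : lonesum M.

Lemma lonesum_switch i i' j j' : M i j -> M i' j' -> M i j' || M i' j.
Proof.
move=> Mij Mi'j'; apply/negPn/negP; rewrite negb_or => /andP[nMij' nMi'j].
have ii' : i != i' by apply: contraNneq nMi'j => <-.
have jj' : j != j' by apply: contraNneq nMij' => <-.
(* Swapping columns [j] and [j'] inside rows [i] and [i'] keeps all line sums. *)
pose N := (\matrix_(a, b)
  if (a == i) || (a == i') then M a (tperm j j' b) else M a b)%R.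
have N_switched a b : (b == j) || (b == j') -> N a b = M (tperm i i' a) b.
  move=> /orP[]/eqP->; rewrite mxE.
  - have [->|ai] := eqVneq a i.
      by rewrite /= tpermL tpermL (negbTE nMij') (negbTE nMi'j).
    have [->|ai'] := eqVneq a i'; first by rewrite orbT tpermL tpermR Mij Mi'j'.
    by rewrite /= tpermD // eq_sym.
  - have [->|ai] := eqVneq a i; first by rewrite /= tpermR tpermL Mij Mi'j'.
    have [->|ai'] := eqVneq a i'.
      by rewrite orbT tpermR tpermR (negbTE nMij') (negbTE nMi'j).
    by rewrite /= tpermD // eq_sym.
have N_fixed a b : ~~ ((b == j) || (b == j')) -> N a b = M a b.
  by rewrite negb_or => /andP[bj bj']; rewrite mxE tpermD 1?eq_sym //; case: ifP.
have /eqP/matrixP/(_ i j) : N == M.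
  apply: (implyP (forallP lonesumM N)); apply/andP; split; apply/forallP => x.
  - rewrite /rowsum; case: (boolP ((x == i) || (x == i'))) => xii'; last first.
      by under eq_bigr do rewrite mxE (negbTE xii').
    under eq_bigr do rewrite mxE xii'.
    by rewrite [X in _ == X](reindex_inj (@perm_inj _ (tperm j j'))).
  - rewrite /colsum; case: (boolP ((x == j) || (x == j'))) => xjj'.
      under eq_bigr do rewrite N_switched //.
      by rewrite [X in _ == X](reindex_inj (@perm_inj _ (tperm i i'))).
    by under eq_bigr do rewrite N_fixed //.
by rewrite N_switched ?eqxx // tpermL Mij (negbTE nMi'j).
Qed.

Lemma lonesum_row_sub i i' j : ~~ M i j -> M i' j -> forall k, M i k -> M i' k.
Proof.
move=> nMij Mi'j k Mik.
by case/orP: (lonesum_switch Mik Mi'j) => // Mij; rewrite Mij in nMij.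
Qed.

Lemma lonesum_rowsum_lt i i' j : ~~ M i j -> M i' j -> rowsum M i < rowsum M i'.
Proof.
by move=> nMij Mi'j; apply: sum_bool_lt (lonesum_row_sub nMij Mi'j) nMij Mi'j.
Qed.

End LonesumRows.

Definition full_rows m n (M : 'M[bool]_(m, n)) : {set 'I_m} :=
  [set i | [forall j, M i j]].

Definition thin_cols m n (M : 'M[bool]_(m, n)) : {set 'I_n} :=
  [set j | [forall i, M i j == (i \in full_rows M)]].

Definition peelable d a b := [&& 0 < a, a <= d, 0 < b & b <= d].

Section PeelableSets.

Variables (d m n : nat) (M : 'M[bool]_(m, n)).
Hypothesis LM : in_L d M.

Lemma in_L_gt0 : (0 < m) || (0 < n) -> (0 < m) && (0 < n).
Proof.
case/and5P: LM => _ /forallP zr /forallP zc _ _ /orP[] n0.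
- have /existsP[j _] := zr (Ordinal n0).
  by rewrite n0 (leq_ltn_trans _ (ltn_ord j)).
- have /existsP[i _] := zc (Ordinal n0).
  by rewrite n0 andbT (leq_ltn_trans _ (ltn_ord i)).
Qed.

Lemma full_rows_nonempty : 0 < m -> exists i, i \in full_rows M.
Proof.
case/and5P: LM => lM _ /forallP zc _ _ m0.
pose imax := [arg max_(i > Ordinal m0) rowsum M i].
exists imax; rewrite inE; apply/forallP => j; apply/negPn/negP => nMj.
have /existsP[i Mij] := zc j.
have := lonesum_rowsum_lt lM nMj Mij; rewrite /imax.
by case: arg_maxnP => // k _ kmax; apply/negP; rewrite -leqNgt; apply: kmax.
Qed.

Lemma thin_cols_nonempty : 0 < n -> exists j, j \in thin_cols M.
Proof.
case/and5P: LM => lM _ _ _ _ n0.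
have [i0 i0A | allfull] := pickP (fun i => i \notin full_rows M); last first.
  exists (Ordinal n0); rewrite inE; apply/forallP => i.
  by have /negbFE iA := allfull i; rewrite iA; move: iA; rewrite inE => /forallP->.
pose imax := [arg max_(i > i0 | i \notin full_rows M) rowsum M i].
have [imaxA imaxP] : imax \notin full_rows M /\
    forall i, i \notin full_rows M -> rowsum M i <= rowsum M imax.
  by rewrite /imax; case: arg_maxnP.
move: (imaxA); rewrite inE negb_forall => /existsP[j nMj].
exists j; rewrite inE; apply/forallP => i.
have [iA|iA] := boolP (i \in full_rows M); first by move: iA; rewrite inE => /forallP->.
apply/eqP/negbTE/negP => Mij.
by have := lonesum_rowsum_lt lM nMj Mij; rewrite ltnNge imaxP.
Qed.

Lemma peelable_full_thin :
  (0 < m) || (0 < n) -> peelable d #|full_rows M| #|thin_cols M|.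
Proof.
move=> /in_L_gt0/andP[m0 n0].
have [i iA] := full_rows_nonempty m0; have [j jB] := thin_cols_nonempty n0.
case/and5P: LM => _ _ _ /forallP/(_ i) rows /forallP/(_ j) cols.
apply/and4P; split.
- by apply/card_gt0P; exists i.
- apply: leq_trans rows; apply/subset_leq_card/subsetP => k kA.
  rewrite inE; apply/eqP/rowP => j'; rewrite !mxE.
  by move: kA iA; rewrite !inE => /forallP-> /forallP->.
- by apply/card_gt0P; exists j.
- apply: leq_trans cols; apply/subset_leq_card/subsetP => k kB.
  rewrite inE; apply/eqP/colP => i'; rewrite !mxE.
  by move: kB jB; rewrite !inE => /forallP/(_ i')/eqP-> /forallP/(_ i')/eqP->.
Qed.

End PeelableSets.

Lemma enum_val_notin (T : finType) (A : {set T}) (r : 'I_#|~: A|) :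
  enum_val r \notin A.
Proof. by have := enum_valP r; rewrite inE. Qed.

Lemma enum_val_onto (T : finType) (A : {set T}) x :
  x \notin A -> exists r : 'I_#|~: A|, enum_val r = x.
Proof.
by rewrite -in_setC => xA; exists (enum_rank_in xA x); rewrite enum_rankK_in.
Qed.

Lemma sum_setC_enum_val (T : finType) (B : {set T}) (F : T -> nat) :
  \sum_x F x = \sum_(x in B) F x + \sum_(c < #|~: B|) F (enum_val c).
Proof.
rewrite (bigID (mem B)) /= -big_enum_val /=; congr (_ + _).
by apply: eq_bigl => x; rewrite inE.
Qed.

Definition same_line_sums m n (M N : 'M[bool]_(m, n)) :=
  [forall i, rowsum N i == rowsum M i] && [forall j, colsum N j == colsum M j].

Section Border.

Variables (m n : nat) (A : {set 'I_m}) (B : {set 'I_n}).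

(* Up to permutations, a bordered [M] is the block matrix [[1, 1]; [0, core M]]
   with the rows [A] on top and the columns [B] on the left. *)
Definition bordered (M : 'M[bool]_(m, n)) :=
  (forall i j, i \in A -> M i j) /\ (forall i j, i \notin A -> j \in B -> ~~ M i j).

Definition core (M : 'M[bool]_(m, n)) : 'M[bool]_(#|~: A|, #|~: B|) :=
  (\matrix_(r, c) M (enum_val r) (enum_val c))%R.

Definition border (X : 'M[bool]_(#|~: A|, #|~: B|)) : 'M[bool]_(m, n) :=
  (\matrix_(i, j) ((i \in A) ||
     [exists r, exists c, [&& enum_val r == i, enum_val c == j & X r c]]))%R.

Lemma border_enum_val X r c : border X (enum_val r) (enum_val c) = X r c.
Proof.
rewrite mxE (negbTE (enum_val_notin r)) /=; apply/existsP/idP => [[r']|Xrc].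
  by case/existsP=> c' /and3P[/eqP/enum_val_inj-> /eqP/enum_val_inj-> ->].
by exists r; apply/existsP; exists c; rewrite !eqxx.
Qed.

Lemma border_bordered X : bordered (border X).
Proof.
split=> i j; first by rewrite mxE => ->.
move=> iA jB; rewrite mxE (negbTE iA) /=; apply/existsP => -[r /existsP[c]].
by case/and3P=> _ /eqP cj; move: jB; rewrite -cj (negbTE (enum_val_notin c)).
Qed.

Lemma core_border X : core (border X) = X.
Proof. by apply/matrixP => r c; rewrite mxE border_enum_val. Qed.

Lemma border_core M : bordered M -> border (core M) = M.
Proof.
case=> Mfull Mzero; apply/matrixP => i j.
have [iA|iA] := boolP (i \in A); first by rewrite mxE iA Mfull.
have [jB|jB] := boolP (j \in B).
  rewrite (negbTE (Mzero _ _ iA jB)); apply/negbTE.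
  exact: (border_bordered (core M)).2.
have [r <-] := enum_val_onto iA; have [c <-] := enum_val_onto jB.
by rewrite border_enum_val mxE.
Qed.

Lemma rowsum_core M r : bordered M -> rowsum (core M) r = rowsum M (enum_val r).
Proof.
case=> _ Mzero; rewrite /rowsum [RHS](sum_setC_enum_val B).
rewrite [X in _ = X + _]big1 ?add0n.
  by apply: eq_bigr => c _; rewrite mxE.
by move=> j jB; rewrite (negbTE (Mzero _ _ (enum_val_notin r) jB)).
Qed.

Lemma colsum_core M c :
  colsum M (enum_val c) = \sum_(i in A) M i (enum_val c) + colsum (core M) c.
Proof.
rewrite /colsum (sum_setC_enum_val A); congr (_ + _).
by apply: eq_bigr => r _; rewrite mxE.
Qed.

Lemma same_line_sums_core M N : bordered M -> bordered N ->
  same_line_sums (core M) (core N) = same_line_sums M N.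
Proof.
move=> bM bN; case: (bM) => Mfull Mzero; case: (bN) => Nfull Nzero.
have sumA c : \sum_(i in A) N i (enum_val c) = \sum_(i in A) M i (enum_val c).
  by apply: eq_bigr => i iA; rewrite Mfull // Nfull.
apply/idP/idP => /andP[/forallP rows /forallP cols]; apply/andP; split; apply/forallP.
- move=> i; have [iA|iA] := boolP (i \in A).
    by apply/eqP/eq_bigr => j _; rewrite Mfull // Nfull.
  by have [r <-] := enum_val_onto iA; rewrite -!rowsum_core.
- move=> j; have [jB|jB] := boolP (j \in B).
    apply/eqP/eq_bigr => i _; have [iA|iA] := boolP (i \in A).
      by rewrite Mfull // Nfull.
    by rewrite (negbTE (Mzero _ _ iA jB)) (negbTE (Nzero _ _ iA jB)).
  by have [c <-] := enum_val_onto jB; rewrite !colsum_core sumA eqn_add2l.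
- by move=> r; rewrite !rowsum_core.
- by move=> c; move: (cols (enum_val c)); rewrite !colsum_core sumA eqn_add2l.
Qed.

Lemma bordered_same_line_sums M N : bordered M -> same_line_sums M N -> bordered N.
Proof.
case=> Mfull Mzero /andP[/forallP rows /forallP cols].
have Nfull i j : i \in A -> N i j.
  move=> iA; apply/negPn/negP => nNij.
  have := sum_bool_lt (fun k _ => Mfull i k iA) nNij (Mfull i j iA).
  by rewrite -/(rowsum N i) -/(rowsum M i) (eqP (rows i)) ltnn.
split=> // i j iA jB; apply/negP => Nij.
have : colsum M j < colsum N j.
  apply: (sum_bool_lt (k := i)) => [k Mkj||//]; last exact: Mzero.
  have [kA|kA] := boolP (k \in A); first by rewrite Nfull.
  by rewrite (negbTE (Mzero _ _ kA jB)) in Mkj.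
by rewrite (eqP (cols j)) ltnn.
Qed.

Lemma lonesum_core M : bordered M -> lonesum (core M) = lonesum M.
Proof.
move=> bM; apply/forallP/forallP => lonesumM N; apply/implyP.
- rewrite -/(same_line_sums M N) => sums.
  have bN := bordered_same_line_sums bM sums.
  move: sums; rewrite -(same_line_sums_core bM bN) => /(implyP (lonesumM (core N))).
  by move=> /eqP coreNM; rewrite -(border_core bN) coreNM border_core.
- rewrite -/(same_line_sums (core M) N) => sums.
  have bN := border_bordered N.
  rewrite -(core_border N) (same_line_sums_core bM bN) in sums *.
  by rewrite (eqP (implyP (lonesumM _) sums)).
Qed.

Section TypeBounds.

Variable d : nat.

Lemma rows_of_type_le_core M :
  bordered M -> rows_of_type_le d M -> rows_of_type_le d (core M).
Proof.
case=> _ Mzero /forallP rows; apply/forallP => r.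
apply: leq_trans (rows (enum_val r)); rewrite -(card_imset _ enum_val_inj).
apply/subset_leq_card/subsetP => _ /imsetP[r' + ->].
rewrite !inE => /eqP/row_eq same; apply/eqP/rowP => j; rewrite !mxE.
have [jB|jB] := boolP (j \in B).
  by rewrite !(negbTE (Mzero _ _ (enum_val_notin _) jB)).
by have [c <-] := enum_val_onto jB; have := same c; rewrite !mxE.
Qed.

Lemma cols_of_type_le_core M :
  bordered M -> cols_of_type_le d M -> cols_of_type_le d (core M).
Proof.
case=> Mfull _ /forallP cols; apply/forallP => c.
apply: leq_trans (cols (enum_val c)); rewrite -(card_imset _ enum_val_inj).
apply/subset_leq_card/subsetP => _ /imsetP[c' + ->].
rewrite !inE => /eqP/col_eq same; apply/eqP/colP => i; rewrite !mxE.
have [iA|iA] := boolP (i \in A); first by rewrite !Mfull.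
by have [r <-] := enum_val_onto iA; have := same r; rewrite !mxE.
Qed.

Lemma rows_of_type_le_border X j0 : j0 \in B -> #|A| <= d ->
  rows_of_type_le d X -> rows_of_type_le d (border X).
Proof.
move=> j0B Ad /forallP rows; have [Mfull Mzero] := border_bordered X.
have same_side i i' :
    row i' (border X) = row i (border X) -> (i' \in A) = (i \in A).
  move=> /row_eq/(_ j0).
  have [i'A|i'A] := boolP (i' \in A); have [iA|iA] := boolP (i \in A) => //.
    by rewrite Mfull // (negbTE (Mzero _ _ iA j0B)).
  by rewrite (negbTE (Mzero _ _ i'A j0B)) Mfull.
apply/forallP => i; have [iA|iA] := boolP (i \in A).
  apply: leq_trans Ad; apply/subset_leq_card/subsetP => i'.
  by rewrite inE => /eqP/same_side->.
have [r <-] := enum_val_onto iA; apply: leq_trans (rows r).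
apply: leq_trans (leq_imset_card enum_val _); apply/subset_leq_card/subsetP => i'.
rewrite inE => /eqP same; have := same_side _ _ same.
rewrite (negbTE (enum_val_notin r)) => /negbT/enum_val_onto[r' Er'].
apply/imsetP; exists r' => //; rewrite inE; apply/eqP/rowP => c.
by rewrite !mxE -!border_enum_val Er' (row_eq same).
Qed.

Lemma cols_of_type_le_border X : no_zero_col X -> #|B| <= d ->
  cols_of_type_le d X -> cols_of_type_le d (border X).
Proof.
move=> /forallP nz Bd /forallP cols; have [_ Mzero] := border_bordered X.
have same_side j j' :
    col j' (border X) = col j (border X) -> (j' \in B) = (j \in B).
  have one_outside (c : 'I_#|~: B|) :
      exists r : 'I_#|~: A|, border X (enum_val r) (enum_val c).
    by have /existsP[r Xrc] := nz c; exists r; rewrite border_enum_val.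
  move=> /col_eq same; apply/idP/idP => [j'B|jB];
    apply/negPn/negP => /enum_val_onto[c Ec].
  - have [r] := one_outside c; rewrite Ec -same.
    by move/negP: (Mzero _ _ (enum_val_notin r) j'B).
  - have [r] := one_outside c; rewrite Ec same.
    by move/negP: (Mzero _ _ (enum_val_notin r) jB).
apply/forallP => j; have [jB|jB] := boolP (j \in B).
  apply: leq_trans Bd; apply/subset_leq_card/subsetP => j'.
  by rewrite inE => /eqP/same_side->.
have [c <-] := enum_val_onto jB; apply: leq_trans (cols c).
apply: leq_trans (leq_imset_card enum_val _); apply/subset_leq_card/subsetP => j'.
rewrite inE => /eqP same; have := same_side _ _ same.
rewrite (negbTE (enum_val_notin c)) => /negbT/enum_val_onto[c' Ec'].
apply/imsetP; exists c' => //; rewrite inE; apply/eqP/colP => r.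
by rewrite !mxE -!border_enum_val Ec' (col_eq same).
Qed.

End TypeBounds.

Lemma in_L_border d X : peelable d #|A| #|B| -> in_L d X -> in_L d (border X).
Proof.
case/and4P=> /card_gt0P[i0 i0A] Ad /card_gt0P[j0 j0B] Bd LX.
case/and5P: (LX) => lX /forallP zr zc rows cols; have [Mfull _] := border_bordered X.
apply/and5P; split.
- by rewrite -lonesum_core ?core_border //; apply: border_bordered.
- apply/forallP => i; have [iA|iA] := boolP (i \in A).
    by apply/existsP; exists j0; rewrite Mfull.
  have [r <-] := enum_val_onto iA; have /existsP[c Xrc] := zr r.
  by apply/existsP; exists (enum_val c); rewrite border_enum_val.
- by apply/forallP => j; apply/existsP; exists i0; rewrite Mfull.
- exact: rows_of_type_le_border j0B Ad rows.
- exact: cols_of_type_le_border zc Bd cols.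
Qed.

Lemma full_rows_border X j0 : j0 \in B -> full_rows (border X) = A.
Proof.
move=> j0B; have [Mfull Mzero] := border_bordered X.
apply/setP => i; rewrite inE; have [iA|iA] := boolP (i \in A).
  by apply/forallP => j; rewrite Mfull.
by apply/negbTE; rewrite negb_forall; apply/existsP; exists j0; apply: Mzero.
Qed.

Lemma thin_cols_border X j0 : no_zero_col X -> j0 \in B -> thin_cols (border X) = B.
Proof.
move=> /forallP nz j0B; have [Mfull Mzero] := border_bordered X.
apply/setP => j; rewrite inE (full_rows_border X j0B).
have [jB|jB] := boolP (j \in B).
  apply/forallP => i; have [iA|iA] := boolP (i \in A); first by rewrite Mfull.
  by rewrite (negbTE (Mzero _ _ iA jB)).
apply/negbTE; rewrite negb_forall; have [c <-] := enum_val_onto jB.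
have /existsP[r Xrc] := nz c; apply/existsP; exists (enum_val r).
by rewrite border_enum_val Xrc (negbTE (enum_val_notin r)).
Qed.

End Border.

Arguments core {m n} A B M.
Arguments border {m n} A B X.

Lemma bordered_full_thin m n (M : 'M[bool]_(m, n)) :
  bordered (full_rows M) (thin_cols M) M.
Proof.
split=> i j; first by rewrite inE => /forallP.
by move=> iA; rewrite inE => /forallP/(_ i)/eqP->.
Qed.

Lemma in_L_core d m n (M : 'M[bool]_(m, n)) :
  in_L d M -> in_L d (core (full_rows M) (thin_cols M) M).
Proof.
move=> LM; have [Mfull Mzero] := bordered_full_thin M.
case/and5P: (LM) => lM /forallP zr _ rows cols; apply/and5P; split.
- by rewrite lonesum_core // bordered_full_thin.
- apply/forallP => r; have /existsP[j Mj] := zr (enum_val r).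
  have [jB|jB] := boolP (j \in thin_cols M).
    by move: Mj; rewrite (negbTE (Mzero _ _ (enum_val_notin r) jB)).
  by have [c Ec] := enum_val_onto jB; apply/existsP; exists c; rewrite mxE Ec.
- apply/forallP => c; have := enum_val_notin c.
  rewrite inE negb_forall => /existsP[i].
  have [iA|iA] := boolP (i \in full_rows M); first by rewrite Mfull.
  have [r <-] := enum_val_onto iA => Mrc; apply/existsP; exists r; rewrite mxE.
  by move: Mrc; case: (M _ _).
- by apply: rows_of_type_le_core => //; apply: bordered_full_thin.
- by apply: cols_of_type_le_core => //; apply: bordered_full_thin.
Qed.

Definition num_L d m n := #|[set M : 'M[bool]_(m, n) | in_L d M]|.

Lemma card_L_peeled d m n (A : {set 'I_m}) (B : {set 'I_n}) : (0 < m) || (0 < n) ->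
  #|[set M : 'M[bool]_(m, n) | [&& in_L d M, full_rows M == A & thin_cols M == B]]| =
  peelable d #|A| #|B| * num_L d #|~: A| #|~: B|.
Proof.
move=> mn; have [AB|notAB] := boolP (peelable d #|A| #|B|); last first.
  rewrite mul0n; apply/eqP; rewrite cards_eq0; apply/eqP/setP => M; rewrite !inE.
  apply/negbTE/and3P => -[LM /eqP MA /eqP MB].
  by move: notAB; rewrite -MA -MB peelable_full_thin.
rewrite mul1n /num_L -(card_imset _ (can_inj (@core_border _ _ A B))).
congr #|pred_of_set _|; apply/setP => M; rewrite inE.
apply/and3P/imsetP => [[LM /eqP MA /eqP MB]|[X + ->]].
  move: MA MB => <- <-; exists (core (full_rows M) (thin_cols M) M).
    by rewrite inE in_L_core.
  by rewrite border_core //; apply: bordered_full_thin.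
rewrite inE => LX; have /and4P[_ _ /card_gt0P[j0 j0B] _] := AB.
case/and5P: (LX) => _ _ zc _ _.
by rewrite in_L_border // (full_rows_border X j0B) (thin_cols_border zc j0B).
Qed.

Lemma num_L_sets d m n : (0 < m) || (0 < n) ->
  num_L d m n = \sum_(A : {set 'I_m}) \sum_(B : {set 'I_n})
                  peelable d #|A| #|B| * num_L d #|~: A| #|~: B|.
Proof.
move=> mn; rewrite {1}/num_L -sum1_card pair_big /=.
rewrite (partition_big (fun M => (full_rows M, thin_cols M)) xpredT) //=.
apply: eq_bigr => -[A B] _; rewrite -card_L_peeled // -sum1_card.
by apply: eq_bigl => M; rewrite !inE xpair_eqE.
Qed.

Lemma sum_set_card m (F : nat -> nat) :
  \sum_(A : {set 'I_m}) F #|A| = \sum_(k < m.+1) 'C(m, k) * F k.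
Proof.
rewrite (partition_big (fun A : {set 'I_m} => inord #|A| : 'I_m.+1) xpredT) //=.
apply: eq_bigr => k _.
have cardA (A : {set 'I_m}) : #|A| < m.+1.
  by rewrite ltnS -[m in _ <= m]card_ord max_card.
transitivity (\sum_(A in [set A : {set 'I_m} | #|A| == k]) F k).
  by apply: eq_big => A; rewrite ?inE -val_eqE /= inordK // => /eqP->.
by rewrite sum_nat_const card_draws card_ord.
Qed.

Lemma num_L_rec d m n : (0 < m) || (0 < n) ->
  num_L d m n = \sum_(i < m.+1) \sum_(j < n.+1)
                  'C(m, i) * 'C(n, j) * (peelable d (m - i) (n - j) * num_L d i j).
Proof.
move=> mn; pose G a b := peelable d (m - a) (n - b) * num_L d a b.
transitivity (\sum_(A : {set 'I_m}) \sum_(B : {set 'I_n}) G #|~: A| #|~: B|).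
  rewrite num_L_sets //; apply: eq_bigr => A _; apply: eq_bigr => B _.
  by rewrite /G [#|A|]cardsCs [#|B|]cardsCs !card_ord.
rewrite (reindex_inj (@setC_inj _)) /=.
under eq_bigr do rewrite (reindex_inj (@setC_inj _)) /= setCK.
under eq_bigr do under eq_bigr do rewrite setCK.
rewrite (sum_set_card m (fun a => \sum_(B : {set 'I_n}) G a #|B|)).
apply: eq_bigr => i _; rewrite (sum_set_card n (G i)) big_distrr /=.
by apply: eq_bigr => j _; rewrite mulnA.
Qed.

Local Open Scope ring_scope.

(* The coefficients of (E_d(x) - 1) (E_d(y) - 1). *)
Definition peel_series d : fps2 := fun a b =>
  if peelable d a b then (a`!)%:R^-1 * (b`!)%:R^-1 else 0.

Lemma fps2_mul_Ed_xy d a b : fps2_mul (Ed_x d) (Ed_y d) a b =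
  (if (a <= d)%N then (a`!)%:R^-1 else 0) * (if (b <= d)%N then (b`!)%:R^-1 else 0).
Proof.
rewrite /fps2_mul big_ord_recr /= big1 ?add0r => [|i _]; last first.
  apply: big1 => j _; have : (0 < a - i)%N by rewrite subn_gt0.
  by rewrite /Ed_y; case: (a - i)%N => //= k _; rewrite mulr0.
rewrite big_ord_recl /= big1 ?addr0 => [|j _]; last by rewrite /Ed_x mul0r.
by rewrite /Ed_x /Ed_y subnn subn0 eqxx.
Qed.

Lemma Ed_denom_peel d a b : Ed_denom d a b = fps2_one a b - peel_series d a b.
Proof.
rewrite /Ed_denom /fps2_sub /fps2_add fps2_mul_Ed_xy.
rewrite /fps2_one /peel_series /peelable /Ed_x /Ed_y.
case: a b => [|a] [|b]; rewrite /= ?fact0 ?invr1 ?andbF ?andbT;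
  by repeat case: ifP => _; rewrite /=; ring.
Qed.

Lemma fps2_mulrBr (f g h : fps2) m n :
  fps2_mul f (fps2_sub g h) m n = fps2_mul f g m n - fps2_mul f h m n.
Proof.
rewrite /fps2_mul -sumrB; apply: eq_bigr => i _.
by rewrite -sumrB; apply: eq_bigr => j _; apply: mulrBr.
Qed.

Lemma fps2_mulr1 (f : fps2) m n : fps2_mul f fps2_one m n = f m n.
Proof.
rewrite /fps2_mul big_ord_recr big1 /= ?add0r => [|i _]; last first.
  by apply: big1 => j _; rewrite /fps2_one subn_eq0 leqNgt ltn_ord mulr0.
rewrite big_ord_recr big1 /= ?add0r => [|j _]; last first.
  by rewrite /fps2_one subnn subn_eq0 leqNgt ltn_ord mulr0.
by rewrite /fps2_one !subnn mulr1.
Qed.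

Lemma L_leE d m n : L_le d m n = (num_L d m n)%:R / (m`! * n`!)%:R.
Proof. by []. Qed.

Lemma L_le00 d : L_le d 0 0 = 1.
Proof.
rewrite L_leE /num_L; have -> : [set M : 'M[bool]_(0, 0) | in_L d M] = [set 0].
  apply/setP => M; rewrite !inE (_ : M == 0); last by apply/eqP/matrixP => -[].
  apply/and5P; split; try by apply/forallP => -[].
  by apply/forallP => N; apply/implyP => _; apply/eqP/matrixP => -[].
by rewrite cards1 fact0 divr1.
Qed.

Lemma L_le_rec d m n : (0 < m)%N || (0 < n)%N ->
  L_le d m n = fps2_mul (L_le d) (peel_series d) m n.
Proof.
move=> mn; rewrite L_leE num_L_rec // natr_sum mulr_suml; apply: eq_bigr => i _.
rewrite natr_sum mulr_suml; apply: eq_bigr => j _.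
rewrite L_leE /peel_series; case: peelable; last by rewrite !muln0 mul0r mulr0.
have [im jn] := (ltnSE (ltn_ord i), ltnSE (ltn_ord j)).
rewrite mul1n -(bin_fact im) -(bin_fact jn) !natrM.
have fact_neq0 k : (k`!)%:R != 0 :> rat by rewrite pnatr_eq0 -lt0n fact_gt0.
have bin_neq0 k l : (l <= k)%N -> ('C(k, l))%:R != 0 :> rat.
  by move=> lk; rewrite pnatr_eq0 -lt0n bin_gt0.
by field; rewrite !fact_neq0 !bin_neq0.
Qed.

Theorem theorem3 (d : nat) : (1 <= d)%N ->
  forall m n : nat, fps2_mul (L_le d) (Ed_denom d) m n = fps2_one m n.
Proof.
move=> _ m n.
have -> : fps2_mul (L_le d) (Ed_denom d) m n =
          fps2_mul (L_le d) (fps2_sub fps2_one (peel_series d)) m n.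
  by apply: eq_bigr => i _; apply: eq_bigr => j _; rewrite Ed_denom_peel.
rewrite fps2_mulrBr fps2_mulr1 /fps2_one.
have [mn|] := boolP ((0 < m)%N || (0 < n)%N).
  rewrite -L_le_rec // subrr.
  by case/orP: mn; rewrite lt0n => /negbTE->; rewrite ?andbF.
rewrite negb_or -!eqn0Ngt => /andP[/eqP-> /eqP->].
by rewrite L_le00 /fps2_mul !big_ord1 /peel_series mulr0 subr0.
Qed.
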